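(* Let $\alpha,\rho\in(-\infty,1)\setminus\{0\}$ and $\sigma>0$, and let $a,b$ be constants. Consider the market with risk-free rate $r=0$ and risky asset $\mathrm{d}S_t=\sigma S_t\,\mathrm{d}W^1_t$ (that is, drift $\mu=0$). The force of mortality $\lambda_t$ follows $$\mathrm{d}\lambda_t=a\lambda_t^2\,\mathrm{d}t+b\lambda_t^{3/2}\,\mathrm{d}W^2_t,$$ with $W^2$ a Brownian motion independent of $W^1$. In an insured drawdown fund with longevity credits, the wealth satisfies $$\mathrm{d}w_t=(k\lambda_tw_t-c_t)\,\mathrm{d}t+q_t\sigma S_t\,\mathrm{d}W^1_t,$$ with $k=1$, where $c_t$ is the consumption rate and $q_t$ the quantity of the risky asset held. Preferences are continuous-time Epstein--Zin with mortality and discount rate $\delta=0$, with aggregator $$f(c,V,\lambda)=\frac1\rho c^\rho(\alpha V)^{1-\frac\rho\alpha}-\lambda V.$$ The associated Hamilton--Jacobi--Bellman equation for the value function $V(t,w,\lambda,S)$ is $$0=\sup_{c,q}\Big[\partial_tV+q\sigma^2S^2\partial_{wS}V+\tfrac12q^2\sigma^2S^2\partial_{ww}V+\tfrac12\sigma^2S^2\partial_{SS}V+a\lambda^2\partial_\lambda V+\tfrac12b^2\lambda^3\partial_{\lambda\lambda}V+\partial_wV\,(k\lambda w-c)+f(c,V,\lambda)\Big].$$ Then this equation has the trivial solution $V\equiv0$, together with the additional analytic solution $$V=\frac{w^\alpha}{\alpha}\,\lambda^{\frac{\alpha(\rho-1)}{\rho}}\left(\frac{(k\alpha-1)\rho}{\alpha(\rho-1)}+a+\frac{b^2(\alpha(\rho-1)-\rho)}{2\rho}\right)^{\frac{\alpha(\rho-1)}{\rho}},$$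 valid so long as the term in brackets is positive.
   Context: The continuous-time Epstein--Zin utility with mortality of a consumption stream is the solution $V$ of the backward SDE $\mathrm{d}V_t=-f(c_t,V_t,\lambda_t)\,\mathrm{d}t+Z_t\,\mathrm{d}W_t$ with $\lim_{t\to\infty}V_t=0$. The parameter $k\in\{0,1\}$ indicates whether longevity credits (the term $k\lambda w$ in the wealth drift) are paid; here $k=1$. *)

From HB Require Import structures.
From mathcomp Require Import all_boot all_order all_algebra.
From mathcomp Require Import all_classical all_reals all_analysis.
Set Implicit Arguments. Unset Strict Implicit. Unset Printing Implicit Defensive.
Import Order.TTheory GRing.Theory Num.Theory.
Local Open Scope ring_scope.

Section EZ.
Variable R : realType.

(* power with the convention that a nonpositive base gives 0
   (only used for the felicity factor (alpha V)^(1 - rho/alpha)) *)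
Definition ppow (x e : R) : R := if 0 < x then x `^ e else 0.

Definition ez_aggregator (alpha rho c V l : R) : R :=
  1 / rho * c `^ rho * ppow (alpha * V) (1 - rho / alpha) - l * V.

Definition valfun := R -> R -> R -> R -> R.   (* V t w lambda S *)

Definition d_t (V : valfun) t w l S : R := derive1 (fun x => V x w l S) t.
Definition d_w (V : valfun) t w l S : R := derive1 (fun x => V t x l S) w.
Definition d_l (V : valfun) t w l S : R := derive1 (fun x => V t w x S) l.
Definition d_S (V : valfun) t w l S : R := derive1 (fun x => V t w l x) S.
Definition d_ww (V : valfun) t w l S : R := derive1 (fun x => d_w V t x l S) w.
Definition d_wS (V : valfun) t w l S : R := derive1 (fun x => d_w V t w l x) S.
Definition d_SS (V : valfun) t w l S : R := derive1 (fun x => d_S V t w l x) S.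
Definition d_ll (V : valfun) t w l S : R := derive1 (fun x => d_l V t w x S) l.

Definition hjb_derivable (V : valfun) t w l S : Prop :=
  derivable (fun x => V x w l S) t 1 /\
  derivable (fun x => V t x l S) w 1 /\
  derivable (fun x => V t w x S) l 1 /\
  derivable (fun x => V t w l x) S 1 /\
  derivable (fun x => d_w V t x l S) w 1 /\
  derivable (fun x => d_w V t w l x) S 1 /\
  derivable (fun x => d_S V t w l x) S 1 /\
  derivable (fun x => d_l V t w x S) l 1.

Definition hjb_hamiltonian (alpha rho sigma a b k : R) (V : valfun)
    t w l S (c q : R) : R :=
  d_t V t w l S
  + q * sigma ^+ 2 * S ^+ 2 * d_wS V t w l S
  + 1 / 2 * q ^+ 2 * sigma ^+ 2 * S ^+ 2 * d_ww V t w l S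
  + 1 / 2 * sigma ^+ 2 * S ^+ 2 * d_SS V t w l S
  + a * l ^+ 2 * d_l V t w l S
  + 1 / 2 * b ^+ 2 * l ^+ 3 * d_ll V t w l S
  + d_w V t w l S * (k * l * w - c)
  + ez_aggregator alpha rho c (V t w l S) l.

Definition solves_hjb (alpha rho sigma a b k : R) (V : valfun) : Prop :=
  forall t w l S, 0 < w -> 0 < l -> 0 < S ->
    hjb_derivable V t w l S /\
    ereal_sup [set (hjb_hamiltonian alpha rho sigma a b k V t w l S c q)%:E
              | c in [set c : R | 0 < c] & q in [set: R]] = 0%E.

End EZ.

From HB Require Import structures.
From mathcomp Require Import all_boot all_order all_algebra.
From mathcomp Require Import all_classical all_reals all_analysis.
From mathcomp Require Import ring lra.
Import Order.TTheory GRing.Theory Num.Theory.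
Local Open Scope ring_scope.

(* Both solutions have the separable form V = C w^e1 l^e2, for which every
   partial derivative in the HJB equation is again a multiple of w^e1 l^e2, so
   the Hamiltonian is explicit; C = 0 gives the trivial solution.  For
   C = K^beta / alpha, e1 = alpha, e2 = beta = alpha (rho - 1) / rho, writing
   Y = alpha V and x = c / (w l K), the Hamiltonian becomes
     Y (alpha - 1) / 2 (q sigma S / w)^2 + Y l K (x^rho / rho - x - (1/rho - 1))
   exactly when K solves the linear equation defining it.  The first term is
   nonpositive since alpha < 1, the second by the Young-type inequality
   x^rho / rho - x <= 1/rho - 1 for rho < 1 (Bernoulli's inequality), and both
   vanish at q = 0, c = w l K, so the supremum over the controls is 0. *)

Section Bernoulli.
Context {R : realType}.
Implicit Types x r : R.

Lemma ln_le_subr1 x : 0 < x -> ln x <= x - 1.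
Proof. by move=> x0; have := expR_ge1Dx (ln x); rewrite lnK ?posrE //; lra. Qed.

Lemma powR_le_bernoulli x r : 0 < x -> 0 <= r <= 1 -> x `^ r <= 1 + r * (x - 1).
Proof.
move=> x0 /andP[r0 r1].
have := convex_expR (Itv01 r0 r1) (ln x) 0.
rewrite !convRE /= expR0 mulr0 addr0 mulr1 lnK ?posrE // /powR gt_eqF // mulrC.
by rewrite /unstable.onem; lra.
Qed.

Lemma powR_ge_bernoulli x r : 0 < x -> r <= 0 -> 1 + r * (x - 1) <= x `^ r.
Proof.
move=> x0 r0; rewrite /powR gt_eqF //.
apply: le_trans (expR_ge1Dx _); rewrite lerD2l.
by rewrite ler_wnM2l // ln_le_subr1.
Qed.

Lemma powR_young x r : 0 < x -> r < 1 -> r != 0 -> x `^ r / r - x <= r^-1 - 1.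
Proof.
move=> x0 r1 rn0.
have -> : x `^ r / r - x = r^-1 - 1 + (x `^ r - (1 + r * (x - 1))) / r by field.
rewrite gerDl.
have [rlt0|rgt0] := ltP r 0.
  apply: mulr_ge0_le0; last by rewrite invr_le0 ltW.
  by rewrite subr_ge0 powR_ge_bernoulli // ltW.
apply: mulr_le0_ge0; last by rewrite invr_ge0.
by rewrite subr_le0 powR_le_bernoulli // rgt0 ltW.
Qed.

End Bernoulli.

Lemma ereal_sup_image2_attained {R : realType} {T1 T2 : Type}
    {A : set T1} {B : set T2} {F : T1 -> T2 -> R} {m : R} (a0 : T1) (b0 : T2) :
  A a0 -> B b0 -> F a0 b0 = m -> (forall a b, A a -> B b -> F a b <= m) ->
  ereal_sup [set (F a b)%:E | a in A & b in B] = m%:E.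
Proof.
move=> Aa0 Bb0 Fm Fle; apply/eqP; rewrite eq_le; apply/andP; split.
  by apply: ge_ereal_sup => _ [a Aa [b Bb <-]]; rewrite lee_fin Fle.
by apply: ereal_sup_ubound; exists a0 => //; exists b0 => //; rewrite Fm.
Qed.

Section Derivatives.
Context {R : realType}.

Lemma derive1_cst_fun (f : R -> R) (c x : R) : (forall y, f y = c) ->
  derivable f x 1 /\ derive1 f x = 0.
Proof.
move=> fc; have -> : f = cst c by apply: funext.
by split; [exact: derivable_cst | exact: derive1_cst].
Qed.

Lemma derive1_scaled_powR (f : R -> R) C e x : 0 < x ->
  (forall y, 0 < y -> f y = C * y `^ e) ->
  derivable f x 1 /\ derive1 f x = C * e * x `^ (e - 1).
Proof.
move=> x0 fE.
have dCpow := is_deriveZ C (is_derive1_powR e x0).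
have fx : \near x, (C \*: (@powR R ^~ e)) x = f x.
  by near=> y; rewrite fE //; near: y; exact: lt_nbhsr.
have [df dfE] := near_eq_is_derive fx dCpow.
by split; rewrite // derive1E dfE; exact: mulrA.
Unshelve. all: by end_near. Qed.

Lemma powR_subr1 (x e : R) : 0 < x -> x `^ (e - 1) = x `^ e / x.
Proof. by move=> x0; rewrite powRB ?powRr1 ?(ltW x0) // (gt_eqF x0) implybT. Qed.

End Derivatives.

Definition power_valfun {R : realType} (C e1 e2 : R) : valfun R :=
  fun _ w l _ => C * w `^ e1 * l `^ e2.

Section PowerValfun.
Variables (R : realType) (C e1 e2 : R).
Let V := power_valfun C e1 e2.

Lemma power_valfun_dt t w l S :
  derivable (fun x => V x w l S) t 1 /\ d_t V t w l S = 0.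
Proof. exact: (derive1_cst_fun _ (V t w l S) _ (fun _ => erefl)). Qed.

Lemma power_valfun_dS t w l S :
  derivable (fun x => V t w l x) S 1 /\ d_S V t w l S = 0.
Proof. exact: (derive1_cst_fun _ (V t w l S) _ (fun _ => erefl)). Qed.

Lemma power_valfun_dSS t w l S :
  derivable (fun x => d_S V t w l x) S 1 /\ d_SS V t w l S = 0.
Proof. by apply: derive1_cst_fun => x; exact: (power_valfun_dS t w l x).2. Qed.

Lemma power_valfun_dwS t w l S :
  derivable (fun x => d_w V t w l x) S 1 /\ d_wS V t w l S = 0.
Proof. exact: (derive1_cst_fun _ (d_w V t w l S) _ (fun _ => erefl)). Qed.

Lemma power_valfun_dw t w l S : 0 < w ->
  derivable (fun x => V t x l S) w 1 /\
  d_w V t w l S = C * l `^ e2 * e1 * w `^ (e1 - 1).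
Proof.
by move=> w0; apply: derive1_scaled_powR => // x _; rewrite /V /power_valfun mulrAC.
Qed.

Lemma power_valfun_dww t w l S : 0 < w ->
  derivable (fun x => d_w V t x l S) w 1 /\
  d_ww V t w l S = C * l `^ e2 * e1 * (e1 - 1) * w `^ (e1 - 1 - 1).
Proof.
by move=> w0; apply: derive1_scaled_powR => // x x0; rewrite (power_valfun_dw t x l S x0).2.
Qed.

Lemma power_valfun_dl t w l S : 0 < l ->
  derivable (fun x => V t w x S) l 1 /\
  d_l V t w l S = C * w `^ e1 * e2 * l `^ (e2 - 1).
Proof. by move=> l0; apply: derive1_scaled_powR. Qed.

Lemma power_valfun_dll t w l S : 0 < l ->
  derivable (fun x => d_l V t w x S) l 1 /\
  d_ll V t w l S = C * w `^ e1 * e2 * (e2 - 1) * l `^ (e2 - 1 - 1).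
Proof.
by move=> l0; apply: derive1_scaled_powR => // x x0; rewrite (power_valfun_dl t w x S x0).2.
Qed.

Lemma power_valfun_hjb_derivable t w l S : 0 < w -> 0 < l -> hjb_derivable V t w l S.
Proof.
move=> w0 l0; do !split.
- exact: (power_valfun_dt t w l S).1.
- exact: (power_valfun_dw t w l S w0).1.
- exact: (power_valfun_dl t w l S l0).1.
- exact: (power_valfun_dS t w l S).1.
- exact: (power_valfun_dww t w l S w0).1.
- exact: (power_valfun_dwS t w l S).1.
- exact: (power_valfun_dSS t w l S).1.
- exact: (power_valfun_dll t w l S l0).1.
Qed.

Lemma power_valfun_hamiltonian alpha rho sigma a b k t w l S c q :
  0 < w -> 0 < l ->
  hjb_hamiltonian alpha rho sigma a b k V t w l S c q =
  C * w `^ e1 * l `^ e2 * (e1 * (e1 - 1) / 2 * (q * sigma * S / w) ^+ 2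
    + (a * e2 + b ^+ 2 * e2 * (e2 - 1) / 2 + k * e1 - 1) * l - e1 * c / w)
  + 1 / rho * c `^ rho * ppow (alpha * (C * w `^ e1 * l `^ e2)) (1 - rho / alpha).
Proof.
move=> w0 l0; rewrite /hjb_hamiltonian /ez_aggregator.
rewrite (power_valfun_dt t w l S).2 (power_valfun_dwS t w l S).2.
rewrite (power_valfun_dSS t w l S).2.
rewrite (power_valfun_dw t w l S w0).2 (power_valfun_dww t w l S w0).2.
rewrite (power_valfun_dl t w l S l0).2 (power_valfun_dll t w l S l0).2.
rewrite !powR_subr1 //.
(* Hiding the felicity term keeps [field] from demanding [rho != 0]. *)
rewrite /V /power_valfun; set felicity := 1 / rho * _ * _.
by field; rewrite !gt_eqF.
Qed.

End PowerValfun.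

Section EpsteinZinSolution.
Variables (R : realType) (alpha rho sigma a b k : R).
Hypotheses (alpha_neq0 : alpha != 0) (rho_neq0 : rho != 0).
Let beta := alpha * (rho - 1) / rho.

Lemma felicity_power_scaling (c w l K : R) : 0 < c -> 0 < w -> 0 < l -> 0 < K ->
  c `^ rho * (K `^ beta * w `^ alpha * l `^ beta) `^ (1 - rho / alpha)
  = (c / (w * l * K)) `^ rho * (K `^ beta * w `^ alpha * l `^ beta * l * K).
Proof.
move=> c0 w0 l0 K0.
have wlK0 : 0 < w * l * K by rewrite !mulr_gt0.
have Y0 : 0 < K `^ beta * w `^ alpha * l `^ beta by rewrite !mulr_gt0 ?powR_gt0.
apply: ln_inj; rewrite ?posrE ?mulr_gt0 ?powR_gt0 ?divr_gt0 //.
rewrite !lnM ?posrE ?mulr_gt0 ?powR_gt0 ?divr_gt0 // !ln_powR.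
rewrite ln_div ?posrE // !lnM ?posrE ?mulr_gt0 ?powR_gt0 // !ln_powR /beta.
by field; rewrite rho_neq0 alpha_neq0.
Qed.

Lemma ez_K_balance K : rho != 1 ->
  K = (k * alpha - 1) * rho / (alpha * (rho - 1)) + a
      + b ^+ 2 * (alpha * (rho - 1) - rho) / (2 * rho) ->
  a * beta + b ^+ 2 * beta * (beta - 1) / 2 + k * alpha - 1
    = alpha * K * (1 - rho^-1).
Proof.
move=> rho_neq1 ->; rewrite /beta.
by field; rewrite rho_neq0 alpha_neq0 subr_eq0 rho_neq1.
Qed.

Lemma ez_power_hamiltonian K t w l S c q : 0 < c -> 0 < w -> 0 < l -> 0 < K ->
  a * beta + b ^+ 2 * beta * (beta - 1) / 2 + k * alpha - 1
    = alpha * K * (1 - rho^-1) ->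
  let Y := K `^ beta * w `^ alpha * l `^ beta in
  let x := c / (w * l * K) in
  hjb_hamiltonian alpha rho sigma a b k (power_valfun (K `^ beta / alpha) alpha beta)
    t w l S c q
  = Y * (alpha - 1) / 2 * (q * sigma * S / w) ^+ 2
    + Y * l * K * (x `^ rho / rho - x - (rho^-1 - 1)).
Proof.
move=> c0 w0 l0 K0 balance Y x.
rewrite power_valfun_hamiltonian // balance.
have -> : alpha * (K `^ beta / alpha * w `^ alpha * l `^ beta) = Y.
  by rewrite /Y; field.
have Y0 : 0 < Y by rewrite !mulr_gt0 ?powR_gt0.
rewrite /ppow Y0 -[1 / rho * _ * _]mulrA /Y felicity_power_scaling // -/Y.
by rewrite /Y /x; field; rewrite rho_neq0 alpha_neq0 !gt_eqF.
Qed.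

Lemma ez_power_solves_hjb K : alpha < 1 -> rho < 1 -> 0 < K ->
  K = (k * alpha - 1) * rho / (alpha * (rho - 1)) + a
      + b ^+ 2 * (alpha * (rho - 1) - rho) / (2 * rho) ->
  solves_hjb alpha rho sigma a b k (power_valfun (K `^ beta / alpha) alpha beta).
Proof.
move=> alpha_lt1 rho_lt1 K0 defK t w l S w0 l0 _.
have balance := ez_K_balance _ (negbT (lt_eqF rho_lt1)) defK.
have Y0 : 0 < K `^ beta * w `^ alpha * l `^ beta by rewrite !mulr_gt0 ?powR_gt0.
have wlK0 : 0 < w * l * K by rewrite !mulr_gt0.
split; first exact: power_valfun_hjb_derivable.
apply: (ereal_sup_image2_attained (w * l * K) 0) => //.
  rewrite ez_power_hamiltonian // divff ?gt_eqF // powR1.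
  by rewrite !mul0r expr0n mulr0 add0r div1r subrr mulr0.
move=> c q c0 _; rewrite ez_power_hamiltonian //.
rewrite -[leRHS](addr0 0); apply: lerD.
  rewrite mulr_le0_ge0 ?sqr_ge0 // mulr_le0_ge0 ?invr_ge0 ?ler0n //.
  by rewrite mulr_ge0_le0 ?subr_le0 ?ltW.
rewrite mulr_ge0_le0 ?subr_le0 ?powR_young ?divr_gt0 //.
by rewrite ltW // !mulr_gt0 ?powR_gt0.
Qed.

End EpsteinZinSolution.

Lemma zero_solves_hjb (R : realType) (alpha rho sigma a b k : R) :
  solves_hjb alpha rho sigma a b k (fun _ _ _ _ => 0).
Proof.
have -> : (fun _ _ _ _ => 0) = power_valfun (0 : R) 0 0.
  by do 4!apply: funext => ?; rewrite /power_valfun !mul0r.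
move=> t w l S w0 l0 _; split; first exact: power_valfun_hjb_derivable.
have hamiltonian0 c q :
    hjb_hamiltonian alpha rho sigma a b k (power_valfun 0 0 0) t w l S c q = 0.
  by rewrite power_valfun_hamiltonian // /ppow !mul0r mulr0 ltxx mulr0 add0r.
by apply: (ereal_sup_image2_attained 1 0) => // [|c q _ _]; rewrite ?hamiltonian0 /=.
Qed.

Theorem theorem4 (R : realType) (alpha rho sigma a b k : R) :
  alpha < 1 -> alpha != 0 -> rho < 1 -> rho != 0 -> 0 < sigma -> k = 1 ->
  solves_hjb alpha rho sigma a b k (fun _ _ _ _ => 0) /\
  (let K := (k * alpha - 1) * rho / (alpha * (rho - 1)) + a
            + b ^+ 2 * (alpha * (rho - 1) - rho) / (2 * rho) in
   0 < K ->
   solves_hjb alpha rho sigma a b k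
     (fun t w l S => w `^ alpha / alpha * l `^ (alpha * (rho - 1) / rho)
                     * K `^ (alpha * (rho - 1) / rho))).
Proof.
move=> alpha_lt1 alpha_neq0 rho_lt1 rho_neq0 _ _.
split; first exact: zero_solves_hjb.
move=> K K0; set beta := alpha * (rho - 1) / rho.
have -> : (fun t w l S => w `^ alpha / alpha * l `^ beta * K `^ beta)
          = power_valfun (K `^ beta / alpha) alpha beta.
  by do 4!apply: funext => ?; rewrite /power_valfun; ring.
exact: ez_power_solves_hjb.
Qed.
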